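(* Let $\mathcal{H}$ be a finite-dimensional complex Hilbert space and let $L(\mathcal{H})$ be the space of linear operators on $\mathcal{H}$ with the Hilbert–Schmidt inner product. Let $U$ be a unitary operator on $\mathcal{H}$ and $A_1,\dots,A_n$ operators on $\mathcal{H}$ forming unital measurements, i.e. $\sum_jA_j^*A_j=I$ and $\sum_jA_jA_j^*=I$. Define linear maps on $L(\mathcal{H})$ by $C(\rho)=U\rho U^*$, $D(\rho)=\sum_{j=1}^nA_j\rho A_j^*$, and $\mathcal{L}(\rho)=qC(\rho)+pD(\rho)$ with $0<p,q<1$, $p+q=1$. If $\lambda=1$ is the only eigenvalue of $D$ with $|\lambda|=1$, then $\lambda=1$ is the only eigenvalue of $\mathcal{L}$ with $|\lambda|=1$. Moreover, if $1$ is an eigenvalue of $D$ of algebraic multiplicity $1$, then $1$ is an eigenvalue of $\mathcal{L}$ of algebraic multiplicity $1$. *)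

From HB Require Import structures.
From mathcomp Require Import all_boot all_order all_algebra.
Set Implicit Arguments. Unset Strict Implicit. Unset Printing Implicit Defensive.
Import Order.TTheory GRing.Theory Num.Theory.
Local Open Scope ring_scope.

(* H = C^N, L(H) = 'M[C]_N.  C is an arbitrary numClosedFieldType
   (complex numbers with conjugation Num.conj and modulus `|.|). *)

Definition adj (C : numClosedFieldType) (N : nat) (A : 'M[C]_N) : 'M[C]_N :=
  (map_mx Num.conj A)^T.

Definition Cmap (C : numClosedFieldType) (N : nat) (U : 'M[C]_N)
  (rho : 'M[C]_N) : 'M[C]_N := U *m rho *m adj U.

Definition Dmap (C : numClosedFieldType) (N n : nat) (A : 'I_n -> 'M[C]_N)
  (rho : 'M[C]_N) : 'M[C]_N := \sum_(j < n) A j *m rho *m adj (A j).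

Definition Lmap (C : numClosedFieldType) (N n : nat) (U : 'M[C]_N)
  (A : 'I_n -> 'M[C]_N) (p q : C) (rho : 'M[C]_N) : 'M[C]_N :=
  q *: Cmap U rho + p *: Dmap A rho.

Definition is_eigenvalue (C : numClosedFieldType) (N : nat)
  (Phi : 'M[C]_N -> 'M[C]_N) (l : C) : Prop :=
  exists2 X : 'M[C]_N, X != 0 & Phi X = l *: X.

(* algebraic multiplicity of l as an eigenvalue of the linear map Phi:
   multiplicity of l as a root of the characteristic polynomial of the
   matrix of Phi (w.r.t. the standard basis of 'M_N, via mxvec). *)
Definition alg_mult (C : numClosedFieldType) (N : nat)
  (Phi : 'M[C]_N -> 'M[C]_N) (l : C) : nat :=
  mup l (char_poly (lin_mx Phi)).

From HB Require Import structures.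
From mathcomp Require Import all_boot all_order all_algebra.
From mathcomp Require Import ring.
Import Order.TTheory GRing.Theory Num.Theory.
Local Open Scope ring_scope.
Set Implicit Arguments. Unset Strict Implicit. Unset Printing Implicit Defensive.

(* Write |X|^2 = tr (X^* X).  C is an isometry and D a contraction for this
   Hilbert-Schmidt norm, so if L X = l X with |l| = 1, then l X lies on the
   sphere of radius |X| and is a proper convex combination of C X (on that
   sphere) and D X (inside the ball); strict convexity of the ball forces
   D X = l X.  This gives the first claim, and shows that every fixed point of
   L is a fixed point of D.  Both maps are unital and trace preserving, so the
   vectorization of the identity is a right and a left fixed vector of their
   matrices; splitting off the corresponding rank-one projection shows that 1
   is a simple root of the characteristic polynomial exactly when no nonzero
   traceless matrix is fixed, a property L inherits from D. *)

Lemma det_1D_rank1 (R : comNzRingType) n (u : 'cV[R]_n) (v : 'rV[R]_n) :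
  \det (1%:M + u *m v) = 1 + (v *m u) 0 0.
Proof.
pose B := block_mx (1%:M : 'M[R]_1) v (- u) (1%:M : 'M_n).
have lowerB : block_mx 1%:M 0 (- u) 1%:M *m block_mx 1%:M v 0 (1%:M + u *m v) = B.
  rewrite mulmx_block ?mul1mx ?mul0mx ?mulmx0 ?addr0 ?add0r ?mulmx1.
  by rewrite mulNmx addrC addrK.
have upperB : block_mx (1%:M + v *m u) v 0 1%:M *m block_mx 1%:M 0 (- u) 1%:M = B.
  rewrite mulmx_block ?mul1mx ?mul0mx ?mulmx0 ?addr0 ?add0r ?mulmx1 mulmxN.
  by rewrite addrK.
have := congr1 determinant lowerB; rewrite -upperB !det_mulmx det_lblock.
rewrite !det_ublock !det1 !mul1r !mulr1 det_mx11 => ->.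
by rewrite !mxE.
Qed.

Lemma map_mx_horner_polyC (R : comNzRingType) m n (A : 'M[R]_(m, n)) (x : R) :
  map_mx (horner_eval x) (map_mx polyC A) = A.
Proof.
by rewrite -map_mx_comp map_mx_id // => a /=; rewrite /horner_eval hornerC.
Qed.

Lemma deflation_factorization (R : comNzRingType) n (M E : 'M[R]_n) (x : R) :
  E *m E = E -> M *m E = E -> E *m M = E ->
  (1%:M + (x - 2%:R) *: E) *m (E + (x%:M - M) *m (1%:M - E)) = x%:M - M.
Proof.
move=> EE ME EM.
have -> : (x%:M - M) *m (1%:M - E) = x%:M - x *: E - M + E.
  rewrite mulmxBr mulmx1 !mulmxBl mul_scalar_mx ME.
  by apply/matrixP => i j; rewrite !mxE; ring.
rewrite !mulmxDl ?mulmxDr ?mulmxBr ?mul1mx -?scalemxAl ?mulmxDr ?mulmxBr.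
rewrite !mulmxN mul_mx_scalar -!scalemxAr EE EM.
by apply/matrixP => i j; rewrite !mxE; ring.
Qed.

Section SimpleRootOne.
Variables (K : fieldType) (n : nat) (M : 'M[K]_n) (u : 'cV[K]_n) (v : 'rV[K]_n).
Hypotheses (vu : v *m u = 1%:M) (Mu : M *m u = u) (vM : v *m M = v).

(* G is char_poly_mx M with the rank-one projection u v onto the fixed line
   replaced by the identity. *)
Let Ep := map_mx polyC (u *m v).
Let G := Ep + char_poly_mx M *m (1%:M - Ep).
Let D1 := u *m v + (1%:M - M) *m (1%:M - u *m v).

Lemma char_poly_deflate : char_poly M = ('X - 1) * \det G.
Proof.
pose up := map_mx (@polyC K) u; pose vp := map_mx (@polyC K) v.
pose Mp := map_mx (@polyC K) M.
have vup : vp *m up = 1%:M by rewrite -map_mxM vu map_scalar_mx.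
have Ep2 : up *m vp *m (up *m vp) = up *m vp.
  by rewrite mulmxA -(mulmxA up) vup mulmx1.
have MEp : Mp *m (up *m vp) = up *m vp by rewrite mulmxA -map_mxM Mu.
have EMp : up *m vp *m Mp = up *m vp by rewrite -mulmxA -map_mxM vM.
rewrite /G (_ : Ep = up *m vp) /char_poly; last by rewrite /Ep map_mxM.
rewrite -[char_poly_mx M]/('X%:M - Mp).
rewrite -{1}(deflation_factorization 'X Ep2 MEp EMp).
rewrite det_mulmx scalemxAl det_1D_rank1 -scalemxAr mxE vup mxE eqxx mulr1.
by congr (_ * _); ring.
Qed.

Lemma horner_det_deflate : (\det G).[1] = \det D1.
Proof.
rewrite -[_.[1]]/(horner_eval 1 _) -det_map_mx /G /char_poly_mx.
rewrite map_mxD map_mxM !map_mxB !map_scalar_mx rmorph1 /Ep !map_mx_horner_polyC.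
by rewrite /= /horner_eval hornerX.
Qed.

Lemma deflate_row_kerP (w : 'rV[K]_n) :
  (w *m D1 = 0) <-> (w *m u = 0 /\ w *m M = w).
Proof.
have Eu : u *m v *m u = u by rewrite -mulmxA vu mulmx1.
have ME : (1%:M - M) *m (u *m v) = 0 by rewrite mulmxBl mul1mx mulmxA Mu subrr.
have D1u : D1 *m u = u.
  rewrite /D1 mulmxDl Eu -mulmxA (mulmxBl _ (u *m v)) mul1mx Eu.
  by rewrite subrr mulmx0 addr0.
split=> [wD1 | [wu wM]].
- have wu : w *m u = 0 by rewrite -D1u mulmxA wD1 mul0mx.
  split=> //; apply/eqP; rewrite eq_sym -subr_eq0; apply/eqP.
  move: wD1; rewrite /D1 mulmxDr mulmxA wu mul0mx add0r mulmxA mulmxBr mulmx1.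
  by rewrite -mulmxA ME mulmx0 subr0 mulmxBr mulmx1.
- rewrite /D1 mulmxDr mulmxA wu mul0mx add0r mulmxA.
  by rewrite mulmxBr mulmx1 -mulmxA ME mulmx0 subr0 mulmxBr mulmx1 wM subrr.
Qed.

(* 1 is a simple root iff the cofactor det G does not vanish at 1. *)
Lemma mup1_char_polyP :
  mup 1 (char_poly M) = 1%N <->
  (forall w : 'rV[K]_n, w *m M = w -> w *m u = 0 -> w = 0).
Proof.
have G0 : \det G != 0.
  apply: contraNneq (monic_neq0 (char_poly_monic M)) => G0.
  by rewrite char_poly_deflate G0 mulr0.
have X1 : ('X - 1 : {poly K}) != 0 by rewrite -polyC1 polyXsubC_eq0.
rewrite char_poly_deflate mupM // -polyC1 -(expr1 ('X - 1%:P)) mup_XsubCX eqxx.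
have -> : (1 + mup 1 (\det G) = 1)%N <-> ~~ root (\det G) 1.
  split=> [/(congr1 predn)/= m0 | nr]; last by rewrite mupNroot.
  by rewrite -dvdp_XsubCl XsubC_dvd // -[mup _ _]add0n m0.
rewrite /root horner_det_deflate; split=> [D1n0 w wM wu | ker0].
- apply/eqP; apply: contraNT D1n0 => w0; apply/det0P.
  by exists w => //; exact/deflate_row_kerP.
- apply/negP => /det0P[w w_neq0 /deflate_row_kerP[wu wM]].
  by rewrite (ker0 w wM wu) eqxx in w_neq0.
Qed.

End SimpleRootOne.

Section HilbertSchmidt.
Variables (C : numClosedFieldType) (N : nat).
Implicit Types X Y Z : 'M[C]_N.

Lemma adjM X Y : adj (X *m Y) = adj Y *m adj X.
Proof. by rewrite /adj map_mxM trmx_mul. Qed.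

Lemma adjK X : adj (adj X) = X.
Proof. by apply/matrixP => i j; rewrite !mxE conjCK. Qed.

Lemma adjD X Y : adj (X + Y) = adj X + adj Y.
Proof. by apply/matrixP => i j; rewrite !mxE rmorphD. Qed.

Lemma adjN X : adj (- X) = - adj X.
Proof. by apply/matrixP => i j; rewrite !mxE rmorphN. Qed.

Lemma adjZ a X : adj (a *: X) = a^* *: adj X.
Proof. by apply/matrixP => i j; rewrite !mxE rmorphM. Qed.

Lemma mxtrace_adj X : \tr (adj X) = (\tr X)^*.
Proof. by rewrite /mxtrace rmorph_sum; apply: eq_bigr => i _; rewrite !mxE. Qed.

Definition hs X Y := \tr (adj X *m Y).

Lemma hsC X Y : hs Y X = (hs X Y)^*.
Proof. by rewrite /hs -mxtrace_adj adjM adjK. Qed.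

Lemma hsDl X Y Z : hs (X + Y) Z = hs X Z + hs Y Z.
Proof. by rewrite /hs adjD mulmxDl mxtraceD. Qed.

Lemma hsDr X Y Z : hs X (Y + Z) = hs X Y + hs X Z.
Proof. by rewrite /hs mulmxDr mxtraceD. Qed.

Lemma hsNl X Y : hs (- X) Y = - hs X Y.
Proof. by rewrite /hs adjN mulNmx linearN. Qed.

Lemma hsNr X Y : hs X (- Y) = - hs X Y.
Proof. by rewrite /hs mulmxN linearN. Qed.

Lemma hsZl a X Y : hs (a *: X) Y = a^* * hs X Y.
Proof. by rewrite /hs adjZ -scalemxAl mxtraceZ. Qed.

Lemma hsZr a X Y : hs X (a *: Y) = a * hs X Y.
Proof. by rewrite /hs -scalemxAr mxtraceZ. Qed.

Lemma hs_selfE X : hs X X = \sum_i \sum_j `|X j i| ^+ 2.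
Proof.
rewrite /hs /mxtrace; apply: eq_bigr => i _; rewrite mxE.
by apply: eq_bigr => j _; rewrite !mxE normCKC.
Qed.

Lemma hs_ge0 X : 0 <= hs X X.
Proof. by rewrite hs_selfE; do 2!apply: sumr_ge0 => ? _; apply: exprn_ge0. Qed.

Lemma hs_eq0 X : hs X X = 0 -> X = 0.
Proof.
rewrite hs_selfE => /eqP; rewrite psumr_eq0 => [/allP X0|i _]; last first.
  by apply: sumr_ge0 => j _; apply: exprn_ge0.
apply/matrixP => j i; have := X0 i (mem_index_enum _).
rewrite psumr_eq0 => [/allP/(_ j (mem_index_enum _))|k _]; last exact: exprn_ge0.
by rewrite mxE expf_eq0 /= normr_eq0 => /eqP.
Qed.

Lemma hs_real X : (hs X X)^* = hs X X.
Proof. exact/geC0_conj/hs_ge0. Qed.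

Lemma hs_subE X Y : hs (X - Y) (X - Y) = hs X X - (hs X Y + hs Y X) + hs Y Y.
Proof. by rewrite !(hsDl, hsDr, hsNl, hsNr); ring. Qed.

Lemma hs_cross_le X Y : hs X Y + hs Y X <= hs X X + hs Y Y.
Proof. by have := hs_ge0 (X - Y); rewrite hs_subE addrAC subr_ge0. Qed.

Lemma hs_sphere_convex_eq (p q : C) X Y Z :
  0 < p -> 0 < q -> p + q = 1 -> X = q *: Y + p *: Z ->
  hs Y Y <= hs X X -> hs Z Z <= hs X X -> Z = X.
Proof.
move=> p0 q0 pq XE YX ZX; set s := hs X X.
set a := hs X Y; set b := hs X Z.
have combE : q * a + p * b = s by rewrite /s {2}XE hsDr !hsZr.
have combCE : q * a^* + p * b^* = s.
  rewrite -(geC0_conj (ltW q0)) -(geC0_conj (ltW p0)) -!rmorphM -rmorphD combE.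
  exact: hs_real.
have reA : a + a^* <= s + s.
  by rewrite /a -hsC; apply: le_trans (hs_cross_le X Y) _; rewrite lerD2l.
have reB : s + s <= b + b^*.
  have : q * (a + a^*) <= q * (s + s) by rewrite ler_wpM2l // ltW.
  have -> : q * (a + a^*) = s + s - p * (b + b^*).
    by rewrite -{1}combE -combCE; ring.
  by rewrite lerBlDr -{1}[s + s]mul1r -pq mulrDl addrC lerD2l ler_pM2l.
apply/subr0_eq/hs_eq0/eqP; rewrite eq_le hs_ge0 andbT.
rewrite hs_subE [hs Z X]hsC -/b -/s.
apply: le_trans (_ : s - (s + s) + s <= 0).
  by rewrite lerD2r lerB // [b^* + b]addrC.
by rewrite opprD addrA subrr sub0r addNr.
Qed.

End HilbertSchmidt.

Lemma mxvec_mul_mxvec1 (R : comNzRingType) N (X : 'M[R]_N) :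
  mxvec X *m (mxvec (1%:M : 'M[R]_N))^T = (\tr X)%:M.
Proof.
apply/matrixP => i j; rewrite !ord1 !mxE mulr1n.
rewrite (reindex _ (curry_mxvec_bij _ _)) /=.
have -> : \tr X = \sum_a \sum_b X a b * (1%:M : 'M[R]_N) a b.
  apply: eq_bigr => a _; rewrite (bigD1 a) //= big1 => [|b nba].
    by rewrite mxE eqxx mulr1 addr0.
  by rewrite mxE eq_sym (negbTE nba) mulr0.
by rewrite pair_bigA; apply: eq_bigr => -[a b] _; rewrite /= mxE !mxvecE.
Qed.

Section AlgMultOne.
Variables (C : numClosedFieldType) (N : nat) (f : {linear 'M[C]_N -> 'M[C]_N}).
Hypotheses (N_gt0 : (0 < N)%N) (f1 : f 1%:M = 1%:M).
Hypothesis tr_f : forall X, \tr (f X) = \tr X.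

(* mxvec 1 is a right fixed vector of lin_mx f by trace preservation and a
   left one by unitality. *)
Lemma alg_mult1P :
  alg_mult f 1 = 1%N <-> (forall X, f X = X -> \tr X = 0 -> X = 0).
Proof.
set u := (mxvec (1%:M : 'M[C]_N))^T.
set v := (N%:R : C)^-1 *: mxvec (1%:M : 'M[C]_N).
have N0 : (N%:R : C) != 0 by rewrite pnatr_eq0 -lt0n.
have vu : v *m u = 1%:M.
  by rewrite -scalemxAl mxvec_mul_mxvec1 mxtrace1 scale_scalar_mx mulVf.
have Mu : lin_mx f *m u = u.
  apply/row_matrixP => i; rewrite !rowE mulmxA -(vec_mxK 'e_i) mul_vec_lin.
  by rewrite !mxvec_mul_mxvec1 tr_f.
have vM : v *m lin_mx f = v by rewrite -scalemxAl mul_vec_lin f1.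
rewrite /alg_mult (mup1_char_polyP vu Mu vM); split=> [ker0 X fX trX | fix0 w].
- apply: (can_inj mxvecK); rewrite linear0; apply: ker0.
    by rewrite mul_vec_lin fX.
  by rewrite mxvec_mul_mxvec1 trX raddf0.
- rewrite -(vec_mxK w) mul_vec_lin mxvec_mul_mxvec1 => /(can_inj mxvecK) fw.
  move/matrixP/(_ 0 0); rewrite !mxE mulr1n => trw.
  by rewrite (fix0 _ fw trw) linear0.
Qed.

End AlgMultOne.

Section Channels.
Variables (C : numClosedFieldType) (N n : nat).
Variables (U : 'M[C]_N) (A : 'I_n -> 'M[C]_N) (p q : C).
Implicit Types X Y : 'M[C]_N.

Lemma Cmap_is_linear : linear (Cmap U).
Proof. by move=> a X Y; rewrite /Cmap mulmxDr mulmxDl -scalemxAr -scalemxAl. Qed.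

Lemma Dmap_is_linear : linear (Dmap A).
Proof.
move=> a X Y; rewrite /Dmap scaler_sumr -big_split /=; apply: eq_bigr => j _.
by rewrite mulmxDr mulmxDl -scalemxAr -scalemxAl.
Qed.

HB.instance Definition _ :=
  GRing.isLinear.Build C 'M[C]_N 'M[C]_N *:%R (Dmap A) Dmap_is_linear.

Lemma Lmap_is_linear : linear (Lmap U A p q).
Proof.
move=> a X Y; rewrite /Lmap Cmap_is_linear Dmap_is_linear !scalerDr !scalerA.
by rewrite (mulrC q) (mulrC p) -!scalerA addrACA -scalerDr.
Qed.

HB.instance Definition _ :=
  GRing.isLinear.Build C 'M[C]_N 'M[C]_N *:%R (Lmap U A p q) Lmap_is_linear.

Hypotheses (UU : adj U *m U = 1%:M) (UUr : U *m adj U = 1%:M).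
Hypotheses (AA : \sum_(j < n) adj (A j) *m A j = 1%:M).
Hypotheses (AAr : \sum_(j < n) A j *m adj (A j) = 1%:M).
Hypothesis pq : p + q = 1.

Lemma Cmap1 : Cmap U 1%:M = 1%:M.
Proof. by rewrite /Cmap mulmx1 UUr. Qed.

Lemma Dmap1 : Dmap A 1%:M = 1%:M.
Proof. by rewrite /Dmap -[RHS]AAr; apply: eq_bigr => j _; rewrite mulmx1. Qed.

Lemma Lmap1 : Lmap U A p q 1%:M = 1%:M.
Proof. by rewrite /Lmap Cmap1 Dmap1 -scalerDl addrC pq scale1r. Qed.

Lemma mxtrace_Cmap X : \tr (Cmap U X) = \tr X.
Proof. by rewrite /Cmap mxtrace_mulC mulmxA UU mul1mx. Qed.

Lemma mxtrace_Dmap X : \tr (Dmap A X) = \tr X.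
Proof.
rewrite /Dmap raddf_sum /= -{2}(mul1mx X) -AA mulmx_suml raddf_sum /=.
by apply: eq_bigr => j _; rewrite mxtrace_mulC mulmxA.
Qed.

Lemma mxtrace_Lmap X : \tr (Lmap U A p q X) = \tr X.
Proof.
rewrite /Lmap mxtraceD !mxtraceZ mxtrace_Cmap mxtrace_Dmap.
by rewrite -mulrDl addrC pq mul1r.
Qed.

Lemma hs_Cmap X : hs (Cmap U X) (Cmap U X) = hs X X.
Proof.
rewrite /hs /Cmap !adjM adjK !mulmxA mxtrace_mulC !mulmxA UU mul1mx.
by rewrite -(mulmxA (adj X)) UU mulmx1.
Qed.

Lemma hs_Dmapr X Y : hs Y (Dmap A X) = \sum_(j < n) hs (Y *m A j) (A j *m X).
Proof.
rewrite /hs /Dmap mulmx_sumr raddf_sum /=; apply: eq_bigr => j _.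
by rewrite adjM !mulmxA mxtrace_mulC !mulmxA.
Qed.

Lemma hs_sum_mull X : \sum_(j < n) hs (A j *m X) (A j *m X) = hs X X.
Proof.
rewrite /hs -(mulmx1 (adj X)) -AA mulmx_sumr mulmx_suml raddf_sum /=.
by apply: eq_bigr => j _; rewrite adjM !mulmxA.
Qed.

Lemma hs_sum_mulr Y : \sum_(j < n) hs (Y *m A j) (Y *m A j) = hs Y Y.
Proof.
rewrite /hs -(mulmx1 (adj Y *m Y)) -AAr mulmx_sumr raddf_sum /=.
apply: eq_bigr => j _; rewrite adjM -!mulmxA mxtrace_mulC -!mulmxA.
by rewrite mxtrace_mulC !mulmxA.
Qed.

(* With Y := D X, bounding each term of <Y, D X> + <D X, Y> by hs_cross_le
   gives 2 |D X|^2 <= |X|^2 + |D X|^2. *)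
Lemma hs_Dmap_le X : hs (Dmap A X) (Dmap A X) <= hs X X.
Proof.
set Y := Dmap A X.
have YY : hs Y Y = \sum_(j < n) hs (Y *m A j) (A j *m X) by rewrite hs_Dmapr.
have YYC : hs Y Y = \sum_(j < n) hs (A j *m X) (Y *m A j).
  rewrite -hs_real {1}/Y hs_Dmapr rmorph_sum; apply: eq_bigr => j _.
  by rewrite [RHS]hsC.
rewrite -(lerD2l (hs Y Y)) {1}YY {1}YYC -big_split /=.
rewrite -(hs_sum_mull X) -(hs_sum_mulr Y) addrC -big_split /=.
by apply: ler_sum => j _; rewrite addrC; exact: hs_cross_le.
Qed.

Lemma Lmap_eigen_unimodular (l : C) X : 0 < p -> 0 < q ->
  Lmap U A p q X = l *: X -> `|l| = 1 -> Dmap A X = l *: X.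
Proof.
move=> p0 q0 LX l1.
have hs_lX : hs (l *: X) (l *: X) = hs X X.
  by rewrite hsZl hsZr mulrA -normCKC l1 expr1n mul1r.
apply: (hs_sphere_convex_eq p0 q0 pq (Y := Cmap U X)); first by rewrite -LX.
  by rewrite hs_lX hs_Cmap.
by rewrite hs_lX hs_Dmap_le.
Qed.

End Channels.

Theorem mainTheorem5 (C : numClosedFieldType) (N n : nat) (U : 'M[C]_N)
  (A : 'I_n -> 'M[C]_N) (p q : C) :
  U *m adj U = 1%:M -> adj U *m U = 1%:M ->
  \sum_(j < n) adj (A j) *m A j = 1%:M ->
  \sum_(j < n) A j *m adj (A j) = 1%:M ->
  0 < p < 1 -> 0 < q < 1 -> p + q = 1 ->
  (forall l : C, is_eigenvalue (Dmap A) l -> `|l| = 1 -> l = 1) ->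
  (forall l : C, is_eigenvalue (Lmap U A p q) l -> `|l| = 1 -> l = 1) /\
  (is_eigenvalue (Dmap A) 1 -> alg_mult (Dmap A) 1 = 1%N ->
     is_eigenvalue (Lmap U A p q) 1 /\ alg_mult (Lmap U A p q) 1 = 1%N).
Proof.
move=> UUr UU AA AAr /andP[p0 _] /andP[q0 _] pq D_peripheral.
have L_eigen_D := Lmap_eigen_unimodular UU AA AAr pq p0 q0.
split=> [l [X X0 LX] l1 | [X X0 _] D_simple].
  by apply: (D_peripheral _ _ l1); exists X => //; apply: L_eigen_D LX l1.
have N_gt0 : (0 < N)%N.
  by move: X X0; case: (posnP N) => // ->; move=> X; rewrite flatmx0 eqxx.
split.
  exists 1%:M; last by rewrite (Lmap1 UUr AAr pq) scale1r.
  apply: contraTneq N_gt0 => /(congr1 mxtrace); rewrite mxtrace1 mxtrace0.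
  by move/eqP; rewrite pnatr_eq0 => /eqP ->.
have D_fix0 := (alg_mult1P N_gt0 (Dmap1 AAr) (mxtrace_Dmap AA)).1 D_simple.
apply/(alg_mult1P N_gt0 (Lmap1 UUr AAr pq) (mxtrace_Lmap UU AA pq)) => Y LY trY.
apply: (D_fix0 _ _ trY); rewrite -[RHS]scale1r.
by apply: L_eigen_D; rewrite ?scale1r ?normr1.
Qed.
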